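(* Let $p$ be a prime, $G$ a group and $H$ a subgroup of $G$ that is topologically $p$-embedded in $G$. Let $\Gamma=\langle G,t \mid t^{-1}ht=h\ \text{for all } h\in H\rangle$. Then $G$ is topologically $p$-embedded in $\Gamma$.
   Context: A subgroup $H$ of a group $G$ is topologically $p$-embedded in $G$ if the subspace topology on $H$ induced by the pro-$p$ topology on $G$ equals the pro-$p$ topology of $H$; equivalently, for every normal subgroup $N$ of $H$ of $p$-power index there is a normal subgroup $M$ of $G$ of $p$-power index with $M\cap H\le N$. *)

From mathcomp Require Import all_boot.
Set Implicit Arguments. Unset Strict Implicit. Unset Printing Implicit Defensive.

Record Grp := {
  carrier :> Type;
  gmul : carrier -> carrier -> carrier;
  gone : carrier;
  ginv : carrier -> carrier;
  gmulA : forall x y z, gmul x (gmul y z) = gmul (gmul x y) z;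
  gmul1 : forall x, gmul gone x = x;
  gmulV : forall x, gmul (ginv x) x = gone
}.

Arguments gmul {g} _ _.
Arguments gone {g}.
Arguments ginv {g} _.

Definition is_subgroup (G : Grp) (S : G -> Prop) : Prop :=
  S gone /\ (forall x y, S x -> S y -> S (gmul x y)) /\ (forall x, S x -> S (ginv x)).

Definition normal_in (G : Grp) (N S : G -> Prop) : Prop :=
  is_subgroup N /\ (forall x, N x -> S x) /\
  (forall s x, S s -> N x -> N (gmul (ginv s) (gmul x s))).

(* N has index n in S: the left cosets x N (x in S) are in bijection with 'I_n *)
Definition index_in (G : Grp) (N S : G -> Prop) (n : nat) : Prop :=
  exists f : G -> 'I_n,
    (forall i, exists x, S x /\ f x = i) /\
    (forall x y, S x -> S y -> (f x = f y <-> N (gmul (ginv x) y))).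

Definition normal_ppower_index (p : nat) (G : Grp) (N S : G -> Prop) : Prop :=
  normal_in N S /\ exists k, index_in N S (p ^ k).

Definition is_hom (G K : Grp) (f : G -> K) : Prop :=
  forall x y, f (gmul x y) = gmul (f x) (f y).

Definition top_p_embedded (p : nat) (G : Grp) (S : G -> Prop) : Prop :=
  forall N, normal_ppower_index p N S ->
    exists M, normal_ppower_index p M (fun _ => True) /\
      (forall x, M x -> S x -> N x).

(* (Gam, iota, t) is the group <G, t | t^-1 h t = h (h in H)>, characterised by
   the universal property of this presentation. *)
Definition is_HNN_centralizing (G : Grp) (H : G -> Prop)
    (Gam : Grp) (iota : G -> Gam) (t : Gam) : Prop :=
  is_hom iota /\
  (forall h, H h -> gmul (ginv t) (gmul (iota h) t) = iota h) /\
  (forall (K : Grp) (phi : G -> K) (k : K), is_hom phi ->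
     (forall h, H h -> gmul (ginv k) (gmul (phi h) k) = phi h) ->
     (exists psi : Gam -> K, is_hom psi /\ (forall g, psi (iota g) = phi g) /\ psi t = k) /\
     (forall psi1 psi2 : Gam -> K, is_hom psi1 -> is_hom psi2 ->
        (forall g, psi1 (iota g) = phi g) -> psi1 t = k ->
        (forall g, psi2 (iota g) = phi g) -> psi2 t = k ->
        forall x, psi1 x = psi2 x)).

(* Killing [t] gives a retraction [r : Gam -> G] with [r \o iota = id], by the
   universal property of the presentation. A normal subgroup [N] of p-power
   index of [iota G] then pulls back along [iota \o r] to a normal subgroup of
   p-power index of [Gam] which meets [iota G] exactly in [N]; so any retract
   is topologically p-embedded. *)

From mathcomp Require Import all_boot.

Set Implicit Arguments.
Unset Strict Implicit.
Unset Printing Implicit Defensive.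

Section GroupTheory.
Variable G : Grp.

Lemma mulgV (x : G) : gmul x (ginv x) = gone.
Proof.
set y := ginv x.
rewrite -[gmul x y]gmul1 -(gmulV y) -gmulA (gmulA y x y).
by rewrite /y gmulV gmul1 -/y gmulV.
Qed.

Lemma mulg1 (x : G) : gmul x gone = x.
Proof. by rewrite -(gmulV x) gmulA mulgV gmul1. Qed.

Lemma mulgI (a x y : G) : gmul a x = gmul a y -> x = y.
Proof. by move=> E; rewrite -(gmul1 x) -(gmul1 y) -(gmulV a) -!gmulA E. Qed.

Lemma invg_unique (a b : G) : gmul a b = gone -> a = ginv b.
Proof. by move=> E; rewrite -(mulg1 a) -(mulgV b) gmulA E gmul1. Qed.

Lemma invg1 : ginv (@gone G) = gone.
Proof. by symmetry; apply: invg_unique; rewrite gmul1. Qed.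

End GroupTheory.

Section Homomorphisms.
Variables (K L : Grp) (f : K -> L).
Hypothesis f_hom : is_hom f.

Lemma hom1 : f gone = gone.
Proof. by apply: (@mulgI L (f gone)); rewrite -f_hom gmul1 mulg1. Qed.

Lemma homV (x : K) : f (ginv x) = ginv (f x).
Proof. by apply: invg_unique; rewrite -f_hom gmulV hom1. Qed.

Lemma hom_comp (M : Grp) (g : L -> M) : is_hom g -> is_hom (fun x => g (f x)).
Proof. by move=> g_hom x y; rewrite f_hom g_hom. Qed.

Lemma preimage_normal_ppower_index (p : nat) (S N : L -> Prop) :
  (forall x, S (f x)) -> (forall s, S s -> exists x, f x = s) ->
  normal_ppower_index p N S ->
  normal_ppower_index p (fun x => N (f x)) (fun _ => True).
Proof.
move=> fS f_onto [[[N1 [NM NV]] [_ Nnorm]] [k [c [c_onto c_coset]]]].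
split; first split; [split; [|split] | split |].
- by rewrite hom1.
- by move=> x y Nx Ny; rewrite f_hom; exact: NM.
- by move=> x Nx; rewrite homV; exact: NV.
- by [].
- by move=> s x _ Nx; rewrite !f_hom homV; exact: Nnorm.
exists k, (fun x => c (f x)); split.
  by move=> i; have [s [/f_onto [x <-] <-]] := c_onto i; exists x.
by move=> x y _ _; rewrite f_hom homV; apply: c_coset.
Qed.

End Homomorphisms.

Lemma retract_top_p_embedded (p : nat) (G Gam : Grp) (iota : G -> Gam)
    (r : Gam -> G) :
  is_hom iota -> is_hom r -> (forall g, r (iota g) = g) ->
  top_p_embedded p (fun y : Gam => exists g : G, iota g = y).
Proof.
move=> iota_hom r_hom r_iota N N_ppow.
exists (fun y => N (iota (r y))); split.
  apply: (preimage_normal_ppower_index (hom_comp r_hom iota_hom) _ _ N_ppow).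
  - by move=> y; exists (r y).
  - by move=> y [g <-]; exists (iota g); rewrite /= r_iota.
by move=> y + [g Eg]; rewrite -Eg r_iota.
Qed.

Lemma HNN_centralizing_retraction (G : Grp) (H : G -> Prop) (Gam : Grp)
    (iota : G -> Gam) (t : Gam) :
  is_HNN_centralizing H iota t ->
  exists r : Gam -> G, is_hom r /\ forall g, r (iota g) = g.
Proof.
move=> [_ [_ univ]].
have id_hom : is_hom (fun x : G => x) by [].
have one_centralizes h : H h -> gmul (ginv gone) (gmul h gone) = h.
  by move=> _; rewrite invg1 gmul1 mulg1.
have [[r [r_hom [r_iota _]]] _] := univ G _ gone id_hom one_centralizes.
by exists r.
Qed.

Theorem lemma2p3 (p : nat) (G : Grp) (H : G -> Prop)
    (Gam : Grp) (iota : G -> Gam) (t : Gam) :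
  prime p ->
  is_subgroup H ->
  top_p_embedded p H ->
  is_HNN_centralizing H iota t ->
  top_p_embedded p (fun y : Gam => exists g : G, iota g = y).
Proof.
move=> _ _ _ HNN.
have [r [r_hom r_iota]] := HNN_centralizing_retraction HNN.
exact: retract_top_p_embedded HNN.1 r_hom r_iota.
Qed.
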